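(* Let $G$ be a finite group, $n\ge 1$, and let $F$ be a $2$-starter under $G$ with $G$-stabilizer $S$. Let $H$ be the subgraph of $K_{\overline{G\times\mathbb{Z}_n}}$ with edge set $$\{[\infty,(x,k)] : x\sim\infty \text{ in } F,\ k\in\mathbb{Z}_n\}\ \cup\ \{[(x,k),(x,r)] : x\sim\infty \text{ in } F,\ k,r\in\mathbb{Z}_n,\ k\neq r\}\ \cup\ \{[(x,k),(y,r)] : x\sim y \text{ in } F,\ x,y\in G,\ k,r\in\mathbb{Z}_n\}.$$ Then $H$ is a $2n$-factor of $K_{\overline{G\times\mathbb{Z}_n}}$, its $(G\times\mathbb{Z}_n)$-stabilizer is exactly $S\times\mathbb{Z}_n$, and $H$ is a $2n$-starter under $G\times\mathbb{Z}_n$.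
   Context: For a finite group $G$, $\overline{G}=G\cup\{\infty\}$, and $K_V$ denotes the complete graph on vertex set $V$; $u\sim v$ means $u$ is adjacent to $v$, and $[u,v]$ denotes an edge. $G$ acts on $\overline{G}$ by right multiplication, with $\infty g=\infty$; for a subgraph $F$ of $K_{\overline{G}}$ and $g\in G$, $Fg$ is the graph obtained by replacing every vertex $v$ by $vg$, and the $G$-stabilizer of $F$ is $\{g\in G: Fg=F\}$. A $k$-factor of $K_V$ is a spanning $k$-regular subgraph. For a graph $\Gamma$ with vertex set $\overline{G}$, its list of differences is the multiset $\Delta\Gamma=\{ab^{-1},\ ba^{-1} : [a,b]\in E(\Gamma),\ a\neq\infty\neq b\}$. Given a finite group $G$ with $k$ dividing $|G|$, a $k$-factor $F$ of $K_{\overline{G}}$ is a $k$-starter under $G$ if (1) the $G$-stabilizer of $F$ has order $k$, and (2) $\Delta F$ contains every element of $G\setminus\{1_G\}$. In $G\times\mathbb{Z}_n$ the group operation is $(g,i)(h,j)=(gh,i+j)$, and $G\times \mathbb{Z}_n$ acts on $\overline{G\times\mathbb{Z}_n}$ by right multiplication fixing $\infty$. *)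

From HB Require Import structures.
From mathcomp Require Import all_boot all_order all_algebra all_fingroup.
Set Implicit Arguments. Unset Strict Implicit. Unset Printing Implicit Defensive.
Local Open Scope group_scope.

(* Vertex set  \overline{G} = G ∪ {∞}, with ∞ := None. *)
Notation ext gT := (option gT).
Notation inf := (@None _).

Definition ract (gT : finGroupType) (v : ext gT) (g : gT) : ext gT :=
  omap (fun x => x * g) v.

(* A graph with vertex set V (subgraph of K_V) is given by its adjacency
   relation; it is a simple graph when symmetric and irreflexive. *)
Definition simple_graph (V : finType) (E : rel V) : Prop :=
  (forall u v, E u v = E v u) /\ (forall u, ~~ E u u).

Definition is_factor (V : finType) (k : nat) (E : rel V) : Prop :=
  simple_graph E /\ forall u, #|[set v | E u v]| = k.

(* Fg : vertices v replaced by vg; so [u,v] is an edge of Fg iff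
   [u g^-1, v g^-1] is an edge of F. *)
Definition gtrans (gT : finGroupType) (F : rel (ext gT)) (g : gT) : rel (ext gT) :=
  fun u v => F (ract u g^-1) (ract v g^-1).

Definition stab (gT : finGroupType) (F : rel (ext gT)) : {set gT} :=
  [set g | [forall u, forall v, gtrans F g u v == F u v]].

Definition in_diffs (gT : finGroupType) (F : rel (ext gT)) (g : gT) : Prop :=
  exists a b : gT, F (Some a) (Some b) /\ (g = a * b^-1 \/ g = b * a^-1).

(* k-starter under G (with the standing hypothesis k | |G|). *)
Definition starter (gT : finGroupType) (k : nat) (F : rel (ext gT)) : Prop :=
  [/\ (k %| #|[set: gT]|)%N, is_factor k F, #|stab F| = k
    & forall g : gT, g != 1 -> in_diffs F g].

(* Z_n for n >= 1, as the additive cyclic group 'I_n (n = n.-1.+1). *)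
Notation Zn n := ('I_n.-1.+1) (only parsing).

(* The graph H on \overline{G × Z_n}: symmetric closure of the listed edges. *)
Definition Hbase (gT : finGroupType) (n : nat) (F : rel (ext gT))
  : rel (ext (gT * Zn n)) :=
  fun u v =>
  match u, v with
  | None, Some (x, _) => F (Some x) inf
  | Some (x, k), Some (y, r) =>
      [&& x == y, F (Some x) inf & k != r] || F (Some x) (Some y)
  | _, _ => false
  end.

Arguments Hbase {gT} n F _ _.

Definition Hgraph (gT : finGroupType) (n : nat) (F : rel (ext gT))
  : rel (ext (gT * Zn n)) :=
  fun u v => Hbase n F u v || Hbase n F v u.
Arguments Hgraph {gT} n F _ _.

From HB Require Import structures.
From mathcomp Require Import all_boot all_order all_algebra all_fingroup.
From mathcomp Require Import zify.

Set Implicit Arguments.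
Unset Strict Implicit.
Unset Printing Implicit Defensive.

(* For a graph F on G ∪ {∞} and n = m + 1, H(F) (= Hgraph n F) is the graph
   on (G × Z_n) ∪ {∞} whose vertex (x, k) is a copy of x: copies of adjacent
   vertices of G are adjacent, and the copies of a neighbour x of ∞ form a
   clique joined to ∞.  The theorem splits into three independent facts,
   each proved for an arbitrary simple graph F:
   - degrees: every vertex of H(F) has n times the degree of the vertex of F
     it copies, so a k-factor F gives an (n k)-factor H(F);
   - stabiliser: translating H(F) by (g, k) gives H(Fg), and F is recovered
     from H(F), so (g, k) fixes H(F) iff g fixes F, i.e. the stabiliser of
     H(F) is S × Z_n;
   - differences: each nonzero (g, k) is a difference along an edge between
     two layers, built from an edge of F realising g (or, for g = 1, from
     the clique over a neighbour of ∞). *)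

Lemma card_set_sum (T : finType) (P : pred T) :
  #|[set v | P v]| = \sum_v P v.
Proof. by rewrite -sum1dep_card big_mkcond /=; apply: eq_bigr => v _; case: (P v). Qed.

Lemma sum_option (T : finType) (f : option T -> nat) :
  \sum_v f v = f None + \sum_x f (Some x).
Proof.
rewrite (bigD1 None) //=; congr (_ + _).
rewrite (reindex_omap Some id) //=; last by case.
by apply: eq_bigl => x; rewrite eqxx.
Qed.

Lemma sum_pair (I J : finType) (f : I * J -> nat) :
  \sum_p f p = \sum_i \sum_j f (i, j).
Proof. by rewrite pair_big; apply: eq_bigr => -[]. Qed.

Lemma sum_neq (m : nat) (k : 'I_m.+1) : \sum_r ((k != r) : nat) = m.
Proof.
rewrite -card_set_sum.
have -> : [set r | k != r] = [set~ k] by apply/setP => r; rewrite !inE eq_sym.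
by rewrite cardsC1 card_ord.
Qed.

Lemma mul_pairV (G1 G2 : finGroupType) (a c : G1) (b d : G2) :
  ((a, b) * (c, d)^-1 = (a * c^-1, b * d^-1))%g.
Proof. by []. Qed.

Lemma stabP (gT : finGroupType) (F : rel (option gT)) (g : gT) :
  reflect (gtrans F g =2 F) (g \in stab F).
Proof.
rewrite inE; apply: (iffP forallP) => [eF u v | eF u].
  exact/eqP/(forallP (eF u)).
by apply/forallP => v; rewrite eF.
Qed.

Lemma gtrans_simple (gT : finGroupType) (F : rel (option gT)) (g : gT) :
  simple_graph F -> simple_graph (gtrans F g).
Proof. by move=> [Fsym Firr]; split=> [u v|u]; [exact: Fsym | exact: Firr]. Qed.

Section Blowup.
Variables (gT : finGroupType) (m : nat).
Local Notation n := m.+1.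
Local Notation H := (Hgraph n).

(* Translating H(F) by (g, k) is the same as building H from the translate
   of F by g: the Z_n-part of H only depends on whether k = r. *)
Lemma gtrans_Hgraph (F : rel (option gT)) (g : gT) (k : 'I_n) :
  gtrans (H F) (g, k) =2 H (gtrans F g).
Proof.
move=> [[x r]|] [[y s]|]; rewrite /gtrans /Hgraph //=.
by rewrite !(inj_eq (mulIg _)).
Qed.

Lemma eq_Hgraph (F1 F2 : rel (option gT)) : F1 =2 F2 -> H F1 =2 H F2.
Proof. by move=> eF [[x k]|] [[y r]|]; rewrite /Hgraph /= ?eF. Qed.

(* ... and conversely a simple graph F can be read off H(F): the edges of F
   inside G are those of a layer G × {k}, the edges at ∞ are unchanged. *)
Lemma Hgraph_inj (F1 F2 : rel (option gT)) :
  simple_graph F1 -> simple_graph F2 -> H F1 =2 H F2 -> F1 =2 F2.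
Proof.
move=> [F1sym F1irr] [F2sym F2irr] eH [x|] [y|].
- have := eH (Some (x, ord0)) (Some (y, ord0)).
  by rewrite /Hgraph /= !andbF /= F1sym F2sym !orbb.
- by have := eH (Some (x, ord0)) None; rewrite /Hgraph /=.
- by have := eH None (Some (y, ord0)); rewrite /Hgraph /= !orbF F1sym F2sym.
- by rewrite (negbTE (F1irr _)) (negbTE (F2irr _)).
Qed.

Variable F : rel (option gT).
Hypothesis F_simple : simple_graph F.

Lemma Hgraph_inf_pair y r : H F None (Some (y, r)) = F (Some y) None.
Proof. by rewrite /Hgraph /= orbF. Qed.

Lemma Hgraph_pair_inf x k : H F (Some (x, k)) None = F (Some x) None.
Proof. by []. Qed.

Lemma Hgraph_pair_pair x y (k r : 'I_n) :
  H F (Some (x, k)) (Some (y, r)) =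
  [&& x == y, F (Some x) None & k != r] || F (Some x) (Some y).
Proof.
have [Fsym Firr] := F_simple.
rewrite /Hgraph /= (Fsym (Some y) (Some x)); have [<-|nxy] := eqVneq x y.
  by rewrite (negbTE (Firr _)) !orbF eq_sym orbb.
by rewrite /= orbb.
Qed.

Lemma Hgraph_simple : simple_graph (H F).
Proof.
split=> [u v|[[x k]|] //]; first by rewrite /Hgraph orbC.
by rewrite Hgraph_pair_pair !eqxx !andbF (negbTE (F_simple.2 _)).
Qed.

(* Every vertex of H(F) has n times the degree of the corresponding vertex of F:
   ∞ sees the n copies of its neighbours, and (x, k) sees the n copies of the
   neighbours of x in G together with, if x ~ ∞, the vertex ∞ and the n - 1
   other copies of x. *)
Lemma Hgraph_degree_inf :
  #|[set v | H F None v]| = n * #|[set v | F None v]|.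
Proof.
have [Fsym Firr] := F_simple.
rewrite !card_set_sum !sum_option (negbTE (Firr _)) sum_pair big_distrr /=.
apply: eq_bigr => y _; rewrite Fsym.
under eq_bigr => r _ do rewrite Hgraph_inf_pair.
by rewrite sum_nat_const card_ord.
Qed.

Lemma Hgraph_degree_pair x k :
  #|[set v | H F (Some (x, k)) v]| = n * #|[set v | F (Some x) v]|.
Proof.
have [Fsym Firr] := F_simple.
have edgeE y (r : 'I_n) : H F (Some (x, k)) (Some (y, r)) =
    (x == y) * (F (Some x) None && (k != r)) + F (Some x) (Some y) :> nat.
  rewrite Hgraph_pair_pair; have [<-|] := eqVneq x y; last by [].
  by rewrite (negbTE (Firr _)) orbF addn0 mul1n.
rewrite !card_set_sum !sum_option sum_pair Hgraph_pair_inf.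
under eq_bigr => y _ do under eq_bigr => r _ do rewrite edgeE.
under eq_bigr => y _ do rewrite big_split /= -big_distrr sum_nat_const card_ord.
rewrite big_split /= -big_distrr /= (bigD1 x) //= eqxx mul1n.
have -> : \sum_r (F (Some x) None && (k != r) : nat) = F (Some x) None * m.
  by case: (F (Some x) None); rewrite /= ?mul1n ?sum_neq // big1.
rewrite big1 ?addn0 => [|y]; last by rewrite eq_sym => /negbTE ->.
lia.
Qed.

Lemma stab_Hgraph : stab (H F) = setX (stab F) [set: 'I_n].
Proof.
apply/setP => -[g k]; rewrite in_setX in_setT andbT.
apply/stabP/stabP => [eH | eF].
  apply: Hgraph_inj (gtrans_simple g F_simple) F_simple _ => u v.
  by rewrite -(gtrans_Hgraph F g k).
by move=> u v; rewrite gtrans_Hgraph; apply: eq_Hgraph.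
Qed.

(* Differences of H(F): (1, k) comes from the edge [(x, k), (x, 0)] for a
   neighbour x of ∞, and (a b^-1, k) from the edge [(a, k), (b, 0)]. *)
Lemma Hgraph_diffs x :
  F (Some x) None -> (forall g : gT, g != 1%g -> in_diffs F g) ->
  forall gk : gT * 'I_n, gk != 1%g -> in_diffs (H F) gk.
Proof.
move=> x_inf Fdiffs [g k]; have [->|g_ne1] := eqVneq g 1%g => gk_ne1.
  have k_ne1 : k != 1%g by apply: contraNneq gk_ne1 => ->.
  exists (x, k), (x, 1%g); split; first by rewrite Hgraph_pair_pair eqxx x_inf k_ne1.
  by left; rewrite mul_pairV mulgV invg1 mulg1.
have [a [b [Fab [->|->]]]] := Fdiffs g g_ne1.
  exists (a, k), (b, 1%g); split; first by rewrite Hgraph_pair_pair Fab orbT.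
  by left; rewrite mul_pairV invg1 mulg1.
exists (a, 1%g), (b, k); split; first by rewrite Hgraph_pair_pair Fab orbT.
by right; rewrite mul_pairV invg1 mulg1.
Qed.

End Blowup.

Lemma Hgraph_factor (gT : finGroupType) (m k : nat) (F : rel (option gT)) :
  is_factor k F -> is_factor (m.+1 * k) (Hgraph m.+1 F).
Proof.
move=> [F_simple Fdeg]; split; first exact: Hgraph_simple.
by case=> [[x r]|]; rewrite (Hgraph_degree_pair, Hgraph_degree_inf) // Fdeg.
Qed.

(* If F is a k-starter under G with k > 0, then H(F) is an (n k)-starter
   under G × Z_n; k > 0 provides a neighbour of ∞, needed for the
   differences (1, k). *)
Lemma Hgraph_starter (gT : finGroupType) (m k : nat) (F : rel (option gT)) :
  (0 < k)%N -> starter k F -> starter (m.+1 * k) (Hgraph m.+1 F).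
Proof.
move=> k_gt0 [k_dvd Ffactor Fstab Fdiffs]; have [F_simple Fdeg] := Ffactor.
have [x x_inf] : exists x, F (Some x) None.
  have : (0 < #|[set v | F None v]|)%N by rewrite Fdeg.
  case/card_gt0P => -[x|]; rewrite inE => Fv.
    by exists x; rewrite F_simple.1.
  by rewrite (negbTE (F_simple.2 _)) in Fv.
split.
- rewrite cardsT card_prod card_ord mulnC; rewrite cardsT in k_dvd.
  exact: dvdn_mul.
- exact: Hgraph_factor.
- by rewrite stab_Hgraph // cardsX Fstab cardsT card_ord mulnC.
- exact: Hgraph_diffs x_inf Fdiffs.
Qed.

Theorem mainTheorem7 (gT : finGroupType) (n : nat) (hn : (0 < n)%N)
  (F : rel (option gT)) (hF : starter 2 F) :
  [/\ is_factor (2 * n) (Hgraph n F),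
      stab (Hgraph n F) = setX (stab F) [set: 'I_n.-1.+1]
    & starter (2 * n) (Hgraph n F)].
Proof.
case: n hn => // m _; have [_ Ffactor _ _] := hF.
rewrite mulnC; split.
- exact: Hgraph_factor.
- exact: stab_Hgraph Ffactor.1.
- exact: Hgraph_starter.
Qed.
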